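(* Let $p$ be an odd prime and $\sim$ an equivalence relation on $\mathbb{Z}_p^\times$ such that $x \sim y$ and $x \neq y$ together imply $(-x) \sim (y-x)$. Let $S_1$ and $S_2$ each be obtained by adjoining $0$ to some equivalence class of $\sim$. Then either $S_1, S_2$ form a distinct difference system, or there exist $a \in S_1$ and $b \in S_2$ such that $\{x - a \mid x \in S_1\} = \{y - b \mid y \in S_2\}$.
   Context: Subsets $S_1,\ldots,S_k$ of an abelian group $A$ form a distinct difference system if: (i) for any $i,j$ and any $x,y \in S_i$, $z,w \in S_j$ with $x \neq y$ and $z \neq w$, the equation $x-y=z-w$ implies $x=z$ and $y=w$; (ii) each $S_i$ contains $0$ and at least one other element; (iii) $S_i \cap S_j = \{0\}$ for $i \neq j$. *)

From HB Require Import structures.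
From mathcomp Require Import all_boot all_order all_algebra all_fingroup.
Set Implicit Arguments. Unset Strict Implicit. Unset Printing Implicit Defensive.
Import GRing.Theory.
Local Open Scope ring_scope.

Definition distinct_difference_system (A : finZmodType) (k : nat)
    (S : 'I_k -> {set A}) : Prop :=
  [/\ (forall (i j : 'I_k) (x y z w : A),
          x \in S i -> y \in S i -> z \in S j -> w \in S j ->
          x != y -> z != w -> x - y = z - w -> x = z /\ y = w),
      (forall i : 'I_k, 0 \in S i /\ exists2 x, x \in S i & x != 0) &
      (forall i j : 'I_k, i != j -> S i :&: S j = [set 0])].

Definition equiv_on_nonzero (T : zmodType) (r : rel T) : Prop :=
  [/\ (forall x, x != 0 -> r x x),
      (forall x y, x != 0 -> y != 0 -> r x y -> r y x) &
      (forall x y z, x != 0 -> y != 0 -> z != 0 -> r x y -> r y z -> r x z)].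

Definition nz_class (T : finZmodType) (r : rel T) (u : T) : {set T} :=
  [set x | (x != 0) && r u x].

From HB Require Import structures.
From mathcomp Require Import all_boot all_order all_algebra all_fingroup.
Import GRing.Theory.
Local Open Scope ring_scope.
Set Implicit Arguments. Unset Strict Implicit.

(* The shift hypothesis makes every translate S - y (y in S) of a class with 0
   adjoined again a class with 0 adjoined, namely that of any nonzero element it
   contains.  Hence if x - y = z - w is a nonzero difference within S_i and
   within S_j, the translates S_i - y and S_j - w are both the class of x - y
   with 0 adjoined, so they coincide.  For i <> j this is the second
   alternative; for i = j and y <> w it makes S_i invariant under a nonzero
   translation, which in Z_p forces S_i to be the whole group and so the two
   classes to be equal. *)

Definition unique_differences (A : finZmodType) (S1 S2 : {set A}) :=
  forall x y z w, x \in S1 -> y \in S1 -> z \in S2 -> w \in S2 ->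
  x != y -> z != w -> x - y = z - w -> x = z /\ y = w.

Lemma unique_differencesC (A : finZmodType) (S1 S2 : {set A}) :
  unique_differences S1 S2 -> unique_differences S2 S1.
Proof.
move=> uniq12 x y z w Sx Sy Sz Sw xy zw /esym e.
by have [-> ->] := uniq12 z w x y Sz Sw Sx Sy zw xy e.
Qed.

Lemma distinct_difference_system_pair (A : finZmodType) (S1 S2 : {set A}) x1 x2 :
  0 \in S1 -> x1 \in S1 -> x1 != 0 -> 0 \in S2 -> x2 \in S2 -> x2 != 0 ->
  unique_differences S1 S1 -> unique_differences S2 S2 ->
  unique_differences S1 S2 -> S1 :&: S2 = [set 0] ->
  distinct_difference_system (fun i : 'I_2 => tnth [tuple S1; S2] i).
Proof.
move=> S1_0 S1x1 x1_0 S2_0 S2x2 x2_0 uniq11 uniq22 uniq12 S12.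
split.
- move=> [[|[|//]] ?] [[|[|//]] ?]; rewrite !(tnth_nth S1) //=.
  exact: unique_differencesC.
- by move=> [[|[|//]] ?]; rewrite (tnth_nth S1) /=; split=> //; [exists x1 | exists x2].
- by move=> [[|[|//]] ?] [[|[|//]] ?] //= _; rewrite !(tnth_nth S1) //= setIC.
Qed.

Lemma Fp_natmul (p : nat) (c t : 'F_p) : prime p -> c != 0 ->
  exists n : nat, t = c *+ n.
Proof.
by move=> p_pr c0; exists (t / c : 'F_p); rewrite -mulr_natl natr_Zp divfK.
Qed.

Lemma Fp_addr_stable_setT (p : nat) (A : {set 'F_p}) (c : 'F_p) :
  prime p -> c != 0 -> 0 \in A -> {in A, forall x, x + c \in A} -> A = setT.
Proof.
move=> p_pr c0 A0 Ac; apply/setP => t; rewrite inE.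
have [n ->] := Fp_natmul t p_pr c0.
by elim: n => [|n IHn]; rewrite ?mulr0n // mulrSr Ac.
Qed.

Lemma Fp_eq_translates_setT (p : nat) (A : {set 'F_p}) (y w : 'F_p) :
  prime p -> 0 \in A -> y != w ->
  [set x - y | x in A] = [set x - w | x in A] -> A = setT.
Proof.
move=> p_pr A0 yw eqA; apply: (Fp_addr_stable_setT (c := w - y) p_pr _ A0).
  by rewrite subr_eq0 eq_sym.
move=> x Ax; have /imsetP[x' Ax' ex] : x - y \in [set x - w | x in A].
  by rewrite -eqA; apply: imset_f.
by rewrite addrCA ex addrC subrK.
Qed.

Section ClassWithZero.

Variables (T : finZmodType) (r : rel T).
Hypothesis requiv : equiv_on_nonzero r.

Definition class0 (u : T) : {set T} := 0 |: nz_class r u.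

Lemma class0_0 u : 0 \in class0 u.
Proof. by rewrite !inE eqxx. Qed.

Lemma mem_class0 u x : x != 0 -> (x \in class0 u) = r u x.
Proof. by move=> x0; rewrite !inE (negbTE x0). Qed.

Lemma class0_id u : u != 0 -> u \in class0 u.
Proof. by case: requiv => refl _ _ u0; rewrite mem_class0 // refl. Qed.

Lemma nz_class_eq u v : u != 0 -> v \in nz_class r u -> nz_class r u = nz_class r v.
Proof.
case: requiv => _ sym trans u0; rewrite inE => /andP[v0 ruv].
apply/setP => x; rewrite !inE; case: (eqVneq x 0) => //= x0.
by apply/idP/idP; [apply: trans (sym _ _ u0 v0 ruv) | apply: trans ruv].
Qed.

Lemma class0_eq u v : u != 0 -> v != 0 -> v \in class0 u -> class0 u = class0 v.
Proof.
move=> u0 v0 uv; rewrite /class0 (nz_class_eq (v := v)) //.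
by rewrite inE v0 -(mem_class0 u v0).
Qed.

Lemma class0I u v : u != 0 -> v != 0 -> nz_class r u != nz_class r v ->
  class0 u :&: class0 v = [set 0].
Proof.
move=> u0 v0 neq_uv; apply/setP => x; rewrite !inE.
case: (eqVneq x 0) => //= x0; apply: contraNF neq_uv => /andP[rux rvx].
have ux : x \in nz_class r u by rewrite inE x0.
have vx : x \in nz_class r v by rewrite inE x0.
by rewrite (nz_class_eq u0 ux) (nz_class_eq v0 vx).
Qed.

Hypothesis rshift : forall x y : T, x != 0 -> y != 0 -> r x y -> x != y ->
  r (- x) (y - x).

Lemma translate_class0_sub u y : u != 0 -> y != 0 -> y \in class0 u ->
  [set x - y | x in class0 u] \subset class0 (- y).
Proof.
case: requiv => refl sym trans u0 y0; rewrite mem_class0 // => ruy.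
have ny0 : - y != 0 by rewrite oppr_eq0.
apply/subsetP => _ /imsetP[x ux ->].
case: (eqVneq x 0) => [-> | x0]; first by rewrite sub0r class0_id.
case: (eqVneq x y) => [-> | xy]; first by rewrite subrr class0_0.
rewrite mem_class0 ?subr_eq0 // rshift // 1?eq_sym //.
by apply: trans (sym _ _ u0 y0 ruy) _; rewrite -?mem_class0.
Qed.

Lemma translate_class0 u y : u != 0 -> y != 0 -> y \in class0 u ->
  [set x - y | x in class0 u] = class0 (- y).
Proof.
move=> u0 y0 uy; have ny0 : - y != 0 by rewrite oppr_eq0.
apply/eqP; rewrite eqEsubset translate_class0_sub //=.
(* The reverse inclusion is the same inclusion for class0 (- y), translated by - y. *)
have := translate_class0_sub ny0 ny0 (class0_id ny0).
rewrite opprK -(class0_eq u0 y0 uy) => back.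
apply/subsetP => z nyz; apply/imsetP; exists (z + y); last by rewrite addrK.
by apply: (subsetP back); apply/imsetP; exists z; rewrite ?opprK.
Qed.

Lemma translate_class0_eq u y d : u != 0 -> y \in class0 u -> d != 0 ->
  d \in [set x - y | x in class0 u] -> [set x - y | x in class0 u] = class0 d.
Proof.
move=> u0 uy d0; case: (eqVneq y 0) => [-> | y0].
  by rewrite (eq_imset _ (@subr0 _)) imset_id; apply: class0_eq.
by rewrite translate_class0 // => nyd; apply: class0_eq; rewrite ?oppr_eq0.
Qed.

Lemma class0_unique_differences u v : u != 0 -> v != 0 ->
  (forall a b, a \in class0 u -> b \in class0 v ->
     [set x - a | x in class0 u] = [set x - b | x in class0 v] -> a = b) ->
  unique_differences (class0 u) (class0 v).
Proof.
move=> u0 v0 translate_inj x y z w ux uy vz vw xy _ e.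
have d0 : x - y != 0 by rewrite subr_eq0.
suff yw : y = w by split=> //; move: e; rewrite yw => /addIr.
apply: translate_inj => //.
have uyd : x - y \in [set x - y | x in class0 u] by apply: imset_f.
have vwd : x - y \in [set x - w | x in class0 v] by rewrite e; apply: imset_f.
by rewrite (translate_class0_eq u0 uy d0 uyd) (translate_class0_eq v0 vw d0 vwd).
Qed.

End ClassWithZero.

Lemma Fp_class0_translate_inj (p : nat) (r : rel 'F_p) u v a b :
  prime p -> equiv_on_nonzero r -> u != 0 -> v != 0 ->
  nz_class r u != nz_class r v ->
  [set x - a | x in class0 r u] = [set x - b | x in class0 r u] -> a = b.
Proof.
move=> p_pr requiv u0 v0 neq_uv eq_ab; apply/eqP; apply: contraNT neq_uv => ab.
have uT := Fp_eq_translates_setT p_pr (class0_0 r u) ab eq_ab.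
by rewrite (nz_class_eq requiv u0 (v := v)) // inE v0 -(mem_class0 r u v0) uT inE.
Qed.

Theorem lemma3p27 (p : nat) (r : rel 'F_p) (u1 u2 : 'F_p) :
  prime p -> odd p ->
  equiv_on_nonzero r ->
  (forall x y : 'F_p, x != 0 -> y != 0 -> r x y -> x != y -> r (- x) (y - x)) ->
  u1 != 0 -> u2 != 0 ->
  let S1 := 0 |: nz_class r u1 in
  let S2 := 0 |: nz_class r u2 in
  distinct_difference_system (fun i : 'I_2 => tnth [tuple S1; S2] i)
  \/ exists a b : 'F_p, [/\ a \in S1, b \in S2 &
        [set x - a | x in S1] = [set y - b | y in S2]].
Proof.
move=> p_pr _ requiv rshift u1_0 u2_0 S1 S2.
have [eq12 | neq12] := eqVneq (nz_class r u1) (nz_class r u2).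
  by right; exists 0, 0; rewrite /S1 /S2 eq12 !inE eqxx.
have [/exists_inP[a S1a /exists_inP[b S2b /eqP eq_ab]] | no_cross] :=
  boolP [exists a in S1, exists b in S2,
           [set x - a | x in S1] == [set y - b | y in S2]].
  by right; exists a, b.
left; apply: (distinct_difference_system_pair (x1 := u1) (x2 := u2));
  rewrite ?class0_0 ?class0_id ?class0I //.
- apply: class0_unique_differences => // a b _ _.
  exact: (Fp_class0_translate_inj p_pr requiv u1_0 u2_0 neq12).
- apply: class0_unique_differences => // a b _ _.
  by apply: (Fp_class0_translate_inj p_pr requiv u2_0 u1_0); rewrite eq_sym.
- apply: class0_unique_differences => // a b S1a S2b eq_ab.
  case/exists_inP: no_cross; exists a => //.
  by apply/exists_inP; exists b => //; apply/eqP.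
Qed.
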